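(* Let $G$ be a finite induced regular group and let $x\in G$ be such that $C_G(x)$ is a maximal centralizer in $G$. If there exists an element $y\in C_G(x)\setminus\beta_G(x)$ such that the order of $yZ(G)$ in $G/Z(G)$ is a prime $p\neq 2$, then $(\beta_G(x)\cup Z(G))/Z(G)$ is an elementary $p$-group.
   Context: For a finite group $G$, $C_G(x)$ denotes the centralizer of $x\in G$ and $Z(G)$ the center; $\beta_G(x)=\{y\in G\mid C_G(y)=C_G(x)\}$. The non-centralizer graph $\Upsilon_G$ is the simple graph with vertex set $G$ in which two distinct vertices $x,y$ are adjacent iff $C_G(x)\neq C_G(y)$; the induced non-centralizer graph $\Upsilon_{G\setminus Z(G)}$ is its induced subgraph on $G\setminus Z(G)$. $G$ is called induced regular if $\Upsilon_{G\setminus Z(G)}$ is a regular graph. A centralizer $C_G(x)$ is called maximal if it is not contained in any other proper centralizer of $G$. A group is called an elementary $p$-group if every non-identity element has order exactly $p$ (it need not be abelian). *)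

From mathcomp Require Import all_boot all_fingroup all_solvable.
Set Implicit Arguments.
Unset Strict Implicit.
Unset Printing Implicit Defensive.
Import GroupScope.
Local Open Scope group_scope.

Definition beta (gT : finGroupType) (G : {group gT}) (x : gT) : {set gT} :=
  [set y in G | 'C_G[y] == 'C_G[x]].

(* degree of x in the induced non-centralizer graph on G \ Z(G):
   distinct vertices u, v adjacent iff C_G(u) <> C_G(v). *)
Definition ind_deg (gT : finGroupType) (G : {group gT}) (x : gT) : nat :=
  #|[set y in G :\: 'Z(G) | (y != x) && ('C_G[y] != 'C_G[x])]|.

Definition induced_regular (gT : finGroupType) (G : {group gT}) : Prop :=
  forall x y, x \in G :\: 'Z(G) -> y \in G :\: 'Z(G) ->
    ind_deg G x = ind_deg G y.

Definition max_centralizer (gT : finGroupType) (G : {group gT}) (x : gT) : Prop :=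
  'C_G[x] \proper G /\
  forall y, y \in G -> 'C_G[y] \proper G -> 'C_G[x] \subset 'C_G[y] ->
    'C_G[y] = 'C_G[x].

Definition elementary_pgroup (gT : finGroupType) (p : nat) (H : {set gT}) : Prop :=
  group_set H /\ forall h, h \in H -> h != 1 -> #[h] = p.

(* Maximality of C_G(x) makes beta(x) :|: Z(G) the centre A of C_G(x), so it
   suffices to show a^p \in Z(G) for every a \in A.  For the given y, y^p is
   central, and for b \in A with b^p \notin Z(G) we have b^p \in beta(x), whence
   C_G(yb) = C_G(x) :&: C(y).  If some a \in A had a^p \notin Z(G), then
   c |-> y^-1 a c (when c^p \in Z(G)) and c |-> y c (otherwise) would map A
   injectively into beta(ya): the two branches cannot meet because y^2 \notin A,
   p being odd.  Induced regularity gives |beta(ya)| = |beta(x)| < |A|. *)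

From mathcomp Require Import all_boot all_fingroup all_solvable.
Import GroupScope.
Local Open Scope group_scope.

Set Implicit Arguments.
Unset Strict Implicit.
Unset Printing Implicit Defensive.

Lemma order_coset_dvdn (gT : finGroupType) (H : {group gT}) a n :
  a \in 'N(H) -> (#[coset H a] %| n) = (a ^+ n \in H).
Proof.
move=> aN; rewrite order_dvdn -morphX //.
by apply/eqP/idP => [/coset_idr->|/coset_id]; rewrite ?groupX.
Qed.

Lemma mem_odd_expg (gT : finGroupType) (H : {group gT}) y n :
  odd n -> y ^+ n \in H -> y ^+ 2 \in H -> y \in H.
Proof.
move=> odd_n ynH y2H.
have <- : (y ^+ 2) ^+ n.+1./2 * (y ^+ n)^-1 = y.
  have halfK : n.+1./2.*2 = n.+1 by rewrite -[RHS]odd_double_half /= odd_n.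
  by rewrite -expgM mul2n halfK expgS mulgK.
by rewrite groupM ?groupV // groupX.
Qed.

Section Centralizers.
Variables (gT : finGroupType) (G : {group gT}).

Lemma proper_cent1 w : w \in G -> ('C_G[w] \proper G) = (w \notin 'Z(G)).
Proof.
move=> wG; rewrite properEneq subsetIl andbT inE wG /= -sub_cent1.
by congr (~~ _); apply/eqP/idP => [<-|/setIidPl //]; apply: subsetIr.
Qed.

Lemma beta_subD w : w \in G -> w \notin 'Z(G) -> beta G w \subset G :\: 'Z(G).
Proof.
move=> wG wZ; apply/subsetP => v; rewrite inE => /andP[vG /eqP eq_vw].
by rewrite in_setD vG andbT -proper_cent1 // eq_vw proper_cent1.
Qed.

Lemma ind_deg_beta w : w \in G -> w \notin 'Z(G) ->
  ind_deg G w = #|G :\: 'Z(G)| - #|beta G w|.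
Proof.
move=> wG wZ; rewrite -(setIidPr (beta_subD wG wZ)) -cardsD /ind_deg.
apply: eq_card => v; rewrite in_set !in_setD [v \in beta _ _]inE.
case: (v =P w) => [->|_]; first by rewrite eqxx wG !andbF.
by case: (v \in G); case: (v \in 'Z(G)); case: (_ == _).
Qed.

Lemma induced_regular_card_beta : induced_regular G ->
  {in G :\: 'Z(G) &, forall v w, #|beta G v| = #|beta G w|}.
Proof.
move=> regG v w vGZ wGZ; have:= regG v w vGZ wGZ.
case/setDP: vGZ => vG vZ; case/setDP: wGZ => wG wZ.
rewrite !ind_deg_beta // => /eqP; rewrite eqn_sub2lE ?subset_leq_card ?beta_subD //.
by move/eqP.
Qed.

End Centralizers.

Section MaxCentralizer.
Variables (gT : finGroupType) (G : {group gT}) (x : gT).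
Hypotheses (xG : x \in G) (maxCx : max_centralizer G x).

Lemma max_centralizer_notin_center : x \notin 'Z(G).
Proof. by rewrite -proper_cent1 //; case: maxCx. Qed.

Lemma beta_setU_center : beta G x :|: 'Z(G) = 'Z('C_G[x]).
Proof.
apply/setP => a; rewrite inE [a \in beta _ _]inE.
have -> : (a \in 'Z('C_G[x])) = (a \in G) && ('C_G[x] \subset 'C[a]).
  rewrite /center [in LHS]inE -sub_cent1 [a \in 'C_G[x]]inE -andbA; congr (_ && _).
  by apply: andb_idl => sCa; rewrite cent1C (subsetP sCa) ?subcent1_id.
have [aG|aG] := boolP (a \in G); last by rewrite (contraNF (subsetP (center_sub G) a)).
have [aZ|aZ] := boolP (a \in 'Z(G)).
  by rewrite orbT (subset_trans (subsetIl _ _)) // sub_cent1; case/setIP: aZ.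
rewrite orbF /=; apply/eqP/idP => [<-|sCa]; first exact: subsetIr.
by apply: maxCx.2; rewrite ?proper_cent1 ?subsetI ?subsetIl.
Qed.

Lemma subcent1M_expZ u b n :
    u \in 'C_G[x] -> u ^+ n \in 'Z(G) -> b \in 'Z('C_G[x]) -> b ^+ n \notin 'Z(G) ->
  'C_G[u * b] = 'C_G[x] :&: 'C[u].
Proof.
move=> uCx unZ bZ bnZ; have /centerP[_ cCxb] := bZ.
have cub : commute u b by apply: commute_sym; apply: cCxb.
have Cbn : 'C_G[b ^+ n] = 'C_G[x].
  have : b ^+ n \in 'Z('C_G[x]) by rewrite groupX.
  rewrite -beta_setU_center inE (negbTE bnZ) orbF.
  by rewrite inE => /andP[_ /eqP].
apply/setP => g; rewrite [in RHS]inE; apply/idP/andP => [|[gCx uCg]].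
  rewrite inE cent1C => /andP[gG ubCg].
  have unCg : u ^+ n \in 'C[g] by apply/cent1P; apply: commute_sym; apply: centerC unZ.
  have gCx : g \in 'C_G[x].
    by rewrite -Cbn inE gG cent1C -(groupMl _ unCg) -expgMn // groupX.
  have bCg : b \in 'C[g] by apply/cent1P; apply: cCxb.
  by rewrite gCx cent1C -(groupMr _ bCg).
have gG : g \in G by case/setIP: gCx.
have bCg : b \in 'C[g] by apply/cent1P; apply: cCxb.
by rewrite inE gG cent1C groupM // -cent1C.
Qed.

Lemma card_beta_lt_center_subcent1 : #|beta G x| < #|'Z('C_G[x])|.
Proof.
rewrite -beta_setU_center; apply/proper_card/properUl/subsetPn; exists 1 => //.
by apply/negP => /(subsetP (beta_subD xG max_centralizer_notin_center)); rewrite inE group1.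
Qed.

Lemma center_sub_center_subcent1 : 'Z(G) \subset 'Z('C_G[x]).
Proof. by rewrite -beta_setU_center subsetUr. Qed.

Lemma center_subcent1_subG : 'Z('C_G[x]) \subset G.
Proof. exact: subset_trans (center_sub _) (subsetIl _ _). Qed.

Section OddOrderWitness.
Variables (y : gT) (p : nat).
Hypotheses (yCx : y \in 'C_G[x]) (yZCx : y \notin 'Z('C_G[x])).
Hypotheses (ypZ : y ^+ p \in 'Z(G)) (p_odd : odd p).

Lemma card_center_subcent1_le_beta a : a \in 'Z('C_G[x]) -> a ^+ p \notin 'Z(G) ->
  #|'Z('C_G[x])| <= #|beta G (y * a)|.
Proof.
move=> aZ apZ.
have ZCx_G := subsetP center_subcent1_subG.
have yG : y \in G by case/setIP: yCx.
have Cya := subcent1M_expZ yCx ypZ aZ apZ.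
pose f c := if c ^+ p \in 'Z(G) then y^-1 * (a * c) else y * c.
have f_beta : {in 'Z('C_G[x]), forall c, f c \in beta G (y * a)}.
  move=> c cZ; rewrite /f inE; case: ifP => cpZ.
    have acZ : a * c \in 'Z('C_G[x]) by rewrite groupM.
    have acpZ : (a * c) ^+ p \notin 'Z(G).
      have /centerP[_ cCxc] := cZ.
      by rewrite expgMn ?groupMr //; apply: commute_sym; apply/cCxc/(subsetP (center_sub _)).
    have yVpZ : y^-1 ^+ p \in 'Z(G) by rewrite expgVn groupV.
    rewrite groupM ?groupV ?yG ?ZCx_G //= (subcent1M_expZ _ yVpZ acZ acpZ) ?groupV // Cya.
    by apply/eqP; congr (_ :&: _); apply/setP => g; rewrite cent1C groupV cent1C.
  rewrite groupM ?yG ?ZCx_G //=.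
  by rewrite (subcent1M_expZ yCx ypZ cZ (negbT cpZ)) Cya.
have yyZ : y * y \notin 'Z('C_G[x]).
  apply: contra yZCx => yyZ; apply: (mem_odd_expg p_odd) => //.
  exact: (subsetP center_sub_center_subcent1).
have f_mixed c d : c \in 'Z('C_G[x]) -> d \in 'Z('C_G[x]) -> y^-1 * (a * c) != y * d.
  move=> cZ dZ; apply: contraNneq yyZ => E.
  have -> : y * y = a * c * d^-1 by rewrite -[a * c](mulKVg y) E mulgA mulgK.
  by rewrite !groupM ?groupV.
have f_inj : {in 'Z('C_G[x]) &, injective f}.
  move=> c d cZ dZ; rewrite /f.
  case: ifP => _; case: ifP => _ E; move: (f_mixed c d cZ dZ) (f_mixed d c dZ cZ).
  - by rewrite E => _ _; apply/(mulgI a)/(mulgI y^-1).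
  - by rewrite E eqxx.
  - by rewrite E eqxx.
  - by move=> _ _; apply/(mulgI y).
rewrite -(card_in_imset f_inj); apply/subset_leq_card/subsetP => _ /imsetP[c cZ ->].
exact: f_beta.
Qed.

Lemma center_subcent1_expZ : induced_regular G ->
  {in 'Z('C_G[x]), forall a, a ^+ p \in 'Z(G)}.
Proof.
move=> regG a aZ; apply: contraT => apZ.
have yaG : y * a \in G.
  by rewrite groupM ?(subsetP center_subcent1_subG a aZ) //; case/setIP: yCx.
have yaZ : y * a \notin 'Z(G).
  rewrite -proper_cent1 // (subcent1M_expZ yCx ypZ aZ apZ).
  exact: sub_proper_trans (subsetIl _ _) maxCx.1.
have := card_center_subcent1_le_beta aZ apZ.
rewrite -(induced_regular_card_beta regG (x := x)) ?in_setD ?xG ?yaG ?yaZ ?max_centralizer_notin_center //.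
by rewrite leqNgt card_beta_lt_center_subcent1.
Qed.

End OddOrderWitness.

End MaxCentralizer.

Theorem proposition3p4 (gT : finGroupType) (G : {group gT}) (x : gT) (p : nat) :
  induced_regular G -> x \in G -> max_centralizer G x ->
  prime p -> p != 2 ->
  (exists2 y, y \in 'C_G[x] :\: beta G x & #[coset 'Z(G) y] = p) ->
  elementary_pgroup p (coset 'Z(G) @: (beta G x :|: 'Z(G))).
Proof.
move=> regG xG maxCx p_pr p_neq2 [y /setDP[yCx yNbeta] oy].
have p_odd : odd p by case: (even_prime p_pr) p_neq2 => [->|].
have nZG : G \subset 'N('Z(G)) := normal_norm (center_normal G).
have yN : y \in 'N('Z(G)) by apply/(subsetP nZG); case/setIP: yCx.
have ypZ : y ^+ p \in 'Z(G) by rewrite -order_coset_dvdn // oy.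
have yZ : y \notin 'Z(G).
  by rewrite -(expg1 y) -order_coset_dvdn // oy dvdn1; case: eqP p_pr => [->|].
have yNZ : y \notin 'Z('C_G[x]) by rewrite -beta_setU_center // inE negb_or yNbeta.
have nZCx : 'Z('C_G[x]) \subset 'N('Z(G)) := subset_trans (center_subcent1_subG G x) nZG.
rewrite beta_setU_center //; split=> [|_ /imsetP[a aZ ->] ntA].
  by rewrite -morphimEsub // groupP.
apply/prime_nt_dvdP; rewrite ?order_eq1 // order_coset_dvdn ?(subsetP nZCx) //.
exact: (center_subcent1_expZ xG maxCx yCx yNZ ypZ p_odd regG).
Qed.
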